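(* Let $\sigma\in\Omega_L$ satisfy $N(\sigma)\le n_0(n_0+1)+1$, and let $\sigma^o$ be the configuration obtained from $\sigma$ by replacing every spin equal to $+1$ by $0$, i.e. $\sigma^o(x)=\min\{\sigma(x),0\}$. Then $\mathbb H(\sigma^o)\le\mathbb H(\sigma)$.
   Context: Fix $h\in(0,1)$ with $2/h\notin\mathbb Z$, $n_0=\lfloor 2/h\rfloor$. $\Lambda_L$ is the two-dimensional discrete torus of side $L$, with $L\ge n_0(n_0+1)+2$, and $\Omega_L=\{-1,0,1\}^{\Lambda_L}$. Hamiltonian $\mathbb H(\sigma)=\sum(\sigma(y)-\sigma(x))^2-h\sum_{x\in\Lambda_L}\sigma(x)$, the first sum over unordered nearest-neighbour pairs $\{x,y\}$. $N(\sigma)=\#\{x\in\Lambda_L:\sigma(x)\ne-1\}$. *)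

From HB Require Import structures.
From mathcomp Require Import all_boot all_order all_algebra.
Set Implicit Arguments. Unset Strict Implicit. Unset Printing Implicit Defensive.
Import Order.TTheory GRing.Theory Num.Theory.
Local Open Scope ring_scope.

Definition site (L : nat) : finType := ('I_L * 'I_L)%type.

(* Nearest-neighbour relation on the torus (coordinates taken mod L). *)
Definition nn (L : nat) (x y : site L) : bool :=
  ((x.1 == y.1) && ((y.2 == ordS x.2) || (x.2 == ordS y.2))) ||
  ((x.2 == y.2) && ((y.1 == ordS x.1) || (x.1 == ordS y.1))).

Definition is_config (L : nat) (s : site L -> int) : Prop :=
  forall x, s x \in [:: (-1)%R; 0%R; 1%R].

(* Hamiltonian: sum over unordered nearest-neighbour pairs {x,y} of
   (s y - s x)^2, written as half the sum over ordered pairs, minus h sum_x s x. *)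
Definition Ham (R : numFieldType) (h : R) (L : nat) (s : site L -> int) : R :=
  (\sum_(x : site L) \sum_(y : site L | nn x y) ((s y - s x) ^+ 2)%:~R) / 2%:R
  - h * \sum_(x : site L) (s x)%:~R.

Definition Nplus (L : nat) (s : site L -> int) : nat :=
  #|[pred x : site L | s x != (-1)%R]|.

Definition zero_plus (L : nat) (s : site L -> int) : site L -> int :=
  fun x => Num.min (s x) 0.

From HB Require Import structures.
From mathcomp Require Import all_boot all_order all_algebra.
From mathcomp Require Import zify ring lra.
Import Order.TTheory GRing.Theory Num.Theory.

Set Implicit Arguments. Unset Strict Implicit. Unset Printing Implicit Defensive.

(* Replacing the plus spins by 0 raises the field energy by h per plus site,
   but lowers the interaction energy by at least 1 per bond between a plus
   site and a non-plus site.  If the k plus sites meet r rows and c columns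
   and k < L, every such row and column is cut at least twice, so there are
   at least 2 (r + c) such bonds, while k <= r c.  Since
   k <= n0 (n0 + 1) + 1 and h n0 <= 2 give h^2 k <= 7, we get
   (h k)^2 <= 16 k <= 16 r c <= 4 (r + c)^2, i.e. h k <= 2 (r + c). *)

Section Cycle.
Variable L : nat.
Implicit Types (i j : 'I_L) (q : pred 'I_L).

Lemma val_iter_ordS j m : val (iter m (@ordS L) j) = (j + m) %% L.
Proof.
elim: m => [|m IHm] /=; first by rewrite addn0 modn_small.
by rewrite IHm -addn1 modnDml addn1 addnS.
Qed.

Lemma ordS_closed_all q j0 :
  q j0 -> (forall j, q j -> q (ordS j)) -> forall j, q j.
Proof.
move=> qj0 qS j; have q_iter m : q (iter m (@ordS L) j0) by elim: m => //= m /qS.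
suff -> : j = iter (j + (L - j0)) (@ordS L) j0 by [].
apply: val_inj; rewrite val_iter_ordS /=.
have -> : j0 + (j + (L - j0)) = j + L by have := ltn_ord j0; lia.
by rewrite modnDr modn_small.
Qed.

Lemma ordS_neq j : 1 < L -> ordS j != j.
Proof.
move=> L_gt1; apply/negP => /eqP/(congr1 (@nat_of_ord L)) /=.
have := ltn_ord j; rewrite leq_eqVlt => /orP[/eqP jL | /modn_small->]; last lia.
by rewrite jL modnn; lia.
Qed.

Lemma ordS_neq_ord_pred j : 2 < L -> ordS j != ord_pred j.
Proof.
move=> L_gt2; apply/negP => /eqP/(congr1 (@ordS L)); rewrite ord_predK.
move/(congr1 (@nat_of_ord L)); rewrite (val_iter_ordS j 2).
have [small | big] := ltnP (j + 2) L; first by rewrite modn_small //; lia.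
have -> : j + 2 = (j + 2 - L) + L by lia.
by rewrite modnDr modn_small; have := ltn_ord j; lia.
Qed.

Lemma ord_pred_neq j : 1 < L -> ord_pred j != j.
Proof.
move=> L_gt1; apply/eqP => pred_j.
by have := ordS_neq (ord_pred j) L_gt1; rewrite ord_predK {1}pred_j eqxx.
Qed.

Lemma cycle_cut_ge2 q :
  (exists i, q i) -> (exists i, ~~ q i) -> 2 <= \sum_j (q j != q (ordS j)).
Proof.
move=> [a qa] [b nqb].
have [j1 /andP[qj1 nqSj1]] : exists j, q j && ~~ q (ordS j).
  apply/existsP; move: (nqb); apply: contraNT => /existsPn out_q.
  apply: (ordS_closed_all qa) => j qj.
  by have := out_q j; rewrite qj negbK.
have [j2 /andP[nqj2 qSj2]] : exists j, ~~ q j && q (ordS j).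
  apply/existsP; move: qa; apply: contraTT => /existsPn out_nq.
  apply: (ordS_closed_all (q := predC q) nqb) => j /= nqj.
  by have := out_nq j; rewrite nqj.
have j21 : j2 != j1 by apply: contraNneq nqj2 => ->.
rewrite (bigD1 j1) //= (bigD1 j2) //= qj1 (negbTE nqSj1) (negbTE nqj2) qSj2 /=.
by rewrite addnA leq_addr.
Qed.

Lemma exists_notin_of_card_lt (T : finType) (A : {set T}) (f : 'I_L -> T) :
  injective f -> #|A| < L -> [exists j, f j \notin A].
Proof.
move=> f_inj; apply: contraTT => /existsPn f_in.
rewrite -leqNgt -[leqLHS]card_ord -(card_imset _ f_inj).
by apply/subset_leq_card/subsetP => _ /imsetP[j _ ->]; have := f_in j; rewrite negbK.
Qed.

End Cycle.

Lemma card_mul_leq_sum (I : finType) (A : {set I}) (m : nat) (g : I -> nat) :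
  (forall i, i \in A -> m <= g i) -> #|A| * m <= \sum_i g i.
Proof.
move=> g_ge; rewrite -sum_nat_const [leqRHS](bigID (mem A)) /=.
by apply: leq_trans (leq_addr _ _); apply: leq_sum.
Qed.

Section Torus.
Variable L : nat.
Implicit Types (A : {set site L}) (x y : site L).

(* Sum over ordered pairs: each boundary bond of A is counted twice. *)
Definition edge_boundary A : nat := \sum_x \sum_(y | nn x y) (x \in A != (y \in A)).
Definition row_cut A : nat := \sum_x (x \in A != ((x.1, ordS x.2) \in A)).
Definition col_cut A : nat := \sum_x (x \in A != ((ordS x.1, x.2) \in A)).

Lemma sum_four_neighbours_le (F : site L -> nat) x : 2 < L ->
  F (x.1, ordS x.2) + F (x.1, ord_pred x.2) + F (ordS x.1, x.2) + F (ord_pred x.1, x.2)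
  <= \sum_(y | nn x y) F y.
Proof.
move=> L_gt2; have L_gt1 : 1 < L by lia.
case: x => a b /=.
have Sb_Pb := ordS_neq_ord_pred b L_gt2; have Sa_Pa := ordS_neq_ord_pred a L_gt2.
have Sa_a := ordS_neq a L_gt1; have Pa_a := ord_pred_neq a L_gt1.
rewrite (bigD1 (a, ordS b)); last by rewrite /nn /= !eqxx.
rewrite (bigD1 (a, ord_pred b)); last first.
  by rewrite /nn /= !eqxx ord_predK eqxx orbT /= xpair_eqE eqxx /= eq_sym.
rewrite (bigD1 (ordS a, b)); last first.
  by rewrite /nn /= !eqxx orbT /= !xpair_eqE (negbTE Sa_a).
rewrite (bigD1 (ord_pred a, b)); last first.
  rewrite /nn /= !eqxx ord_predK eqxx !orbT /= !xpair_eqE (negbTE Pa_a) /=.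
  by rewrite eq_sym (negbTE Sa_Pa).
by rewrite /= !addnA leq_addr.
Qed.

Lemma edge_boundary_ge_cuts A : 2 < L -> 2 * (row_cut A + col_cut A) <= edge_boundary A.
Proof.
move=> L_gt2; pose cut x y : nat := x \in A != (y \in A).
have cutC x y : cut x y = cut y x by rewrite /cut eq_sym.
have left_right : \sum_x cut x (x.1, ord_pred x.2) = row_cut A.
  rewrite (reindex (fun x : site L => (x.1, ordS x.2))) /=; last first.
    by exists (fun x => (x.1, ord_pred x.2)) => -[a b] _ /=; rewrite ?ordSK ?ord_predK.
  by apply: eq_bigr => -[a b] _ /=; rewrite ordSK cutC.
have down_up : \sum_x cut x (ord_pred x.1, x.2) = col_cut A.
  rewrite (reindex (fun x : site L => (ordS x.1, x.2))) /=; last first.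
    by exists (fun x => (ord_pred x.1, x.2)) => -[a b] _ /=; rewrite ?ordSK ?ord_predK.
  by apply: eq_bigr => -[a b] _ /=; rewrite ordSK cutC.
apply: leq_trans _ (leq_sum _ (fun x _ => sum_four_neighbours_le (cut x) x L_gt2)).
by rewrite !big_split /= left_right down_up -/(row_cut A) -/(col_cut A); lia.
Qed.

Lemma row_cut_ge A : #|A| < L -> 2 * #|[set x.1 | x in A]| <= row_cut A.
Proof.
move=> A_small.
have -> : row_cut A = \sum_i \sum_j ((i, j) \in A != ((i, ordS j) \in A)).
  by rewrite pair_bigA; apply: eq_bigr => -[].
rewrite mulnC; apply: card_mul_leq_sum => _ /imsetP[[i j] ij_A ->] /=.
apply: (cycle_cut_ge2 (q := fun j => (i, j) \in A)); first by exists j.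
have /existsP[k k_out] := exists_notin_of_card_lt (f := pair i) (fun _ _ e => congr1 snd e) A_small.
by exists k.
Qed.

Lemma col_cut_ge A : #|A| < L -> 2 * #|[set x.2 | x in A]| <= col_cut A.
Proof.
move=> A_small.
have -> : col_cut A = \sum_j \sum_i ((i, j) \in A != ((ordS i, j) \in A)).
  by rewrite exchange_big pair_bigA; apply: eq_bigr => -[].
rewrite mulnC; apply: card_mul_leq_sum => _ /imsetP[[i j] ij_A ->] /=.
apply: (cycle_cut_ge2 (q := fun i => (i, j) \in A)); first by exists i.
have /existsP[k k_out] :=
  exists_notin_of_card_lt (f := fun i => (i, j)) (fun _ _ e => congr1 fst e) A_small.
by exists k.
Qed.

Lemma edge_boundary_ge_rows_cols A : 2 < L -> #|A| < L ->
  4 * (#|[set x.1 | x in A]| + #|[set x.2 | x in A]|) <= edge_boundary A.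
Proof.
move=> L_gt2 A_small; have := edge_boundary_ge_cuts A L_gt2.
have := row_cut_ge A_small; have := col_cut_ge A_small; lia.
Qed.

Lemma card_le_rows_cols A : #|A| <= #|[set x.1 | x in A]| * #|[set x.2 | x in A]|.
Proof.
rewrite -cardsX; apply/subset_leq_card/subsetP => -[i j] ij_A.
by rewrite in_setX !(imset_f _ ij_A).
Qed.

End Torus.

Local Open Scope ring_scope.

Definition plus_sites L (s : site L -> int) : {set site L} := [set x | s x == 1].

Lemma card_plus_sites_le_Nplus L (s : site L -> int) : (#|plus_sites s| <= Nplus s)%N.
Proof. by apply/subset_leq_card/subsetP => x; rewrite !inE => /eqP->. Qed.

Lemma sqr_diff_min0_drop (a b : int) :
  a \in [:: -1; 0; 1] -> b \in [:: -1; 0; 1] ->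
  ((a == 1) != (b == 1) : nat)%:Z <= (b - a) ^+ 2 - (Num.min b 0 - Num.min a 0) ^+ 2.
Proof. by rewrite !inE => /or3P[] /eqP-> /or3P[] /eqP->. Qed.

Lemma Ham_zero_plus_le (R : realFieldType) (h : R) L (s : site L -> int) :
  is_config s ->
  Ham h (zero_plus s) <=
  Ham h s + h * #|plus_sites s|%:R - (edge_boundary (plus_sites s))%:R / 2%:R.
Proof.
move=> s_config; set A := plus_sites s.
have interface_drop : (edge_boundary A)%:R <=
    \sum_x \sum_(y | nn x y) ((s y - s x) ^+ 2)%:~R
    - \sum_x \sum_(y | nn x y) ((zero_plus s y - zero_plus s x) ^+ 2)%:~R :> R.
  rewrite -sumrB natr_sum; apply: ler_sum => x _.
  rewrite -sumrB natr_sum; apply: ler_sum => y _.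
  rewrite -intrB !inE; have := sqr_diff_min0_drop (s_config x) (s_config y).
  by rewrite -(ler_int R).
have field_drop : \sum_x (s x)%:~R - \sum_x (zero_plus s x)%:~R = #|A|%:R :> R.
  rewrite -sumrB -sum1_card natr_sum [RHS]big_mkcond /=; apply: eq_bigr => x _.
  rewrite inE /zero_plus -intrB.
  by move: (s_config x); rewrite !inE => /or3P[] /eqP->.
move/(congr1 (fun t => h * t)): field_drop; rewrite /= mulrBr /Ham; lra.
Qed.

Lemma mul_le_half_perimeter (R : realFieldType) (h k r c : R) :
  0 <= h -> 0 <= k -> 0 <= r -> 0 <= c -> k <= r * c -> h ^+ 2 * k <= 16 ->
  h * k <= 2 * (r + c).
Proof.
move=> h_ge0 k_ge0 r_ge0 c_ge0 k_le_rc hk_le.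
have sqr_le : (h * k) ^+ 2 <= (2 * (r + c)) ^+ 2.
  have : 0 <= (r - c) ^+ 2 by exact: sqr_ge0.
  nra.
by rewrite -ler_sqr // ?nnegrE; nra.
Qed.

Lemma sqr_mul_le_seven (R : realFieldType) (h n k : R) :
  0 < h -> h < 1 -> 0 <= h * n -> h * n <= 2 -> k <= n * (n + 1) + 1 ->
  h ^+ 2 * k <= 7.
Proof.
move=> h_gt0 h_lt1 hn_ge0 hn_le2 k_le.
have : h ^+ 2 * k <= (h * n) ^+ 2 + h * (h * n) + h ^+ 2.
  have -> : (h * n) ^+ 2 + h * (h * n) + h ^+ 2 = h ^+ 2 * (n * (n + 1) + 1) by ring.
  by rewrite ler_pM2l // exprn_gt0.
nra.
Qed.

Lemma floor_two_div_bounds (R : archiRealFieldType) (h : R) : 0 < h -> h < 1 ->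
  2 <= Num.floor (2 / h) /\ h * (Num.floor (2 / h))%:~R <= 2.
Proof.
move=> h_gt0 h_lt1; split; first by rewrite floor_ge_int ler_pdivlMr //; lra.
by have := floor_le (2 / h); rewrite ler_pdivlMr // mulrC.
Qed.

Theorem mainTheorem20 (R : archiRealFieldType) (h : R) (L : nat)
  (s : site L -> int) :
  0 < h -> h < 1 -> ~~ (2 / h \is a Num.int) ->
  (Num.floor (2 / h) * (Num.floor (2 / h) + 1) + 2 <= (L : int)) ->
  is_config s ->
  ((Nplus s : int) <= Num.floor (2 / h) * (Num.floor (2 / h) + 1) + 1) ->
  Ham h (zero_plus s) <= Ham h s.
Proof.
move=> h_gt0 h_lt1 _ L_large s_config N_small.
have [n0_ge2 hn0_le2] := floor_two_div_bounds h_gt0 h_lt1.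
set n0 := Num.floor (2 / h) in L_large N_small n0_ge2 hn0_le2.
set A := plus_sites s; set r := #|[set x.1 | x in A]|; set c := #|[set x.2 | x in A]|.
have A_le_N : (#|A| <= Nplus s)%N := card_plus_sites_le_Nplus s.
have A_small : (#|A| < L)%N by rewrite -ltz_nat; lia.
have L_gt2 : (2 < L)%N by rewrite -ltz_nat; nia.
have hA_sqr : h ^+ 2 * #|A|%:R <= 7.
  apply: (sqr_mul_le_seven h_gt0 h_lt1 _ hn0_le2).
    by apply: mulr_ge0; [exact: ltW h_gt0 | rewrite ler0z; lia].
  have : (#|A| : int) <= n0 * (n0 + 1) + 1 by lia.
  by rewrite -(ler_int R) !(intrD, intrM).
have hA : h * #|A|%:R <= 2 * (r%:R + c%:R).
  apply: mul_le_half_perimeter; rewrite ?ler0n ?(ltW h_gt0) //; last by lra.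
  by rewrite -natrM ler_nat card_le_rows_cols.
have : (4 * (r + c))%:R <= (edge_boundary A)%:R :> R.
  by rewrite ler_nat edge_boundary_ge_rows_cols.
rewrite natrM natrD => perimeter.
have := Ham_zero_plus_le h s_config; rewrite -/A; lra.
Qed.
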